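(* Let $P(X)=\prod_{i=1}^n(X-x_i)=\sum_{i=0}^n a_iX^i$ ($a_n=1$) and $G^{ij}=\Gamma_{\mathbb E}(a_i,a_j)$, $0\le i,j\le n-1$, regarded as polynomial functions of $(a_0,\dots,a_{n-1})$. Then on the set $\mathcal D$ of coefficient vectors of polynomials with $n$ distinct real roots: (1) $\mathrm{discr}(P)=\det(G^{ij})_{0\le i,j\le n-1}$; (2) for every $i\in\{0,\dots,n-1\}$, $\sum_j G^{ij}\,\partial_{a_j}\log\mathrm{discr}(P)=2\sum_j\partial_{a_j}G^{ij}$; (3) $\sum_{i,j}X^iG^{ij}\,\partial_{a_j}\log\mathrm{discr}(P)=-P''(X)$, i.e. $\Gamma_{\mathbb E}\big(P(X),\log\mathrm{discr}(P)\big)=-P''(X)$.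
   Context: $\Gamma_{\mathbb E}(f,g)=\sum_i\partial_{x_i}f\,\partial_{x_i}g$ on $\mathbb{R}^n$. For $P=\prod(X-x_i)$, $\mathrm{discr}(P)=\prod_{i<j}(x_i-x_j)^2$, a polynomial in the coefficients. $P''$ is the second derivative in $X$. *)

From Stdlib Require Import Reals Arith ClassicalEpsilon.
Open Scope R_scope.

Fixpoint fsum (n : nat) (f : nat -> R) : R :=
  match n with O => 0 | S m => fsum m f + f m end.
Fixpoint fprod (n : nat) (f : nat -> R) : R :=
  match n with O => 1 | S m => fprod m f * f m end.

(* coefx n x i = coefficient of X^i in prod_{k<n} (X - x_k) *)
Fixpoint coefx (n : nat) (x : nat -> R) (i : nat) : R :=
  match n with
  | O => if Nat.eqb i 0 then 1 else 0
  | S m => (match i with O => 0 | S i' => coefx m x i' end) - x m * coefx m x i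
  end.

(* the derivative of f : R -> R at t (chosen; meaningful where f is differentiable) *)
Definition deriv1 (f : R -> R) (t : R) : R :=
  epsilon (inhabits 0) (fun l => derivable_pt_lim f t l).

Definition upd (x : nat -> R) (k : nat) (t : R) : nat -> R :=
  fun i => if Nat.eqb i k then t else x i.

Definition pd (F : (nat -> R) -> R) (x : nat -> R) (k : nat) : R :=
  deriv1 (fun t => F (upd x k t)) (x k).

Definition GammaE (n : nat) (F H : (nat -> R) -> R) (x : nat -> R) : R :=
  fsum n (fun k => pd F x k * pd H x k).

(* x_0 < ... < x_{n-1} are the roots of X^n + sum_{i<n} a_i X^i *)
Definition is_ordered_roots (n : nat) (a x : nat -> R) : Prop :=
  (forall k, (S k < n)%nat -> x k < x (S k)) /\
  (forall i, (i < n)%nat -> a i = coefx n x i).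

Definition inD (n : nat) (a : nat -> R) : Prop := exists x, is_ordered_roots n a x.

Definition roots (n : nat) (a : nat -> R) : nat -> R :=
  epsilon (inhabits (fun _ => 0)) (is_ordered_roots n a).

(* G^{ij} = Gamma_E(a_i, a_j), as a function of the coefficients (on D) *)
Definition G (n i j : nat) (a : nat -> R) : R :=
  GammaE n (fun y => coefx n y i) (fun y => coefx n y j) (roots n a).

Definition discr (n : nat) (a : nat -> R) : R :=
  let x := roots n a in fprod n (fun j => fprod j (fun i => (x i - x j) ^ 2)).

Definition Peval (n : nat) (a : nat -> R) (X : R) : R :=
  X ^ n + fsum n (fun i => a i * X ^ i).

Fixpoint det (n : nat) (M : nat -> nat -> R) : R :=
  match n with
  | O => 1
  | S m => fsum (S m) (fun j =>
      (-1) ^ j * M O j * det m (fun r c => M (S r) (if Nat.ltb c j then c else S c)))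
  end.

From Pilot Require Import Defs.
From Stdlib Require Import Reals ClassicalEpsilon Lra Lia FunctionalExtensionality.
From mathcomp Require Import all_boot all_algebra.
From mathcomp Require Import Rstruct.
(* re-import so that [fprod] refers to the product of Defs, not MathComp's *)
Import Defs.
Open Scope R_scope.

(* The proof works in root coordinates.  Write P_l = P/(X - x_l),
   P_{lk} = P/((X - x_l)(X - x_k)) and E_{l i} = [X^i] P_l.
   - Since d a_i / d x_l = -E_{l i}, G = E^T E is a Gram matrix.
   - (1): the Vandermonde matrix V_{k j} = x_k^j satisfies V E^T = diag(P'(x_k))
     because P_l(x_k) = delta_{kl} P'(x_k); as det V^2 = discr and
     prod_k P'(x_k)^2 = discr^2, det G = det E^2 = discr.
   - The ordered roots depend differentiably on a, with
     w_{j k} := d x_k / d a_j = - x_k^j / P'(x_k) (an implicit-function argument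
     through the intermediate value theorem); hence d_j log discr = sum_k w_{j k} c_k
     with c_k = sum_{l <> k} 2 / (x_k - x_l).
   - The rows of E are dual to the columns of w: sum_j E_{l j} w_{j k} = -delta_{kl}.
     This turns both sides of (2) into multiples of sum_l E_{l i} c_l, and the
     left side of (3) into - sum_{k <> l} P_{lk}(X) = - P''(X). *)

Lemma fsum_ext n f g : (forall i, (i < n)%coq_nat -> f i = g i) -> fsum n f = fsum n g.
Proof.
elim: n => [|n IH] H //=; rewrite IH; first by rewrite H //; lia.
by move=> i Hi; apply: H; lia.
Qed.

Lemma fprod_ext n f g : (forall i, (i < n)%coq_nat -> f i = g i) -> fprod n f = fprod n g.
Proof.
elim: n => [|n IH] H //=; rewrite IH; first by rewrite H //; lia.
by move=> i Hi; apply: H; lia.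
Qed.

Lemma fsum_add n f g : fsum n (fun i => f i + g i) = fsum n f + fsum n g.
Proof. elim: n => [|n IH] /=; [ring | rewrite IH; ring]. Qed.

Lemma fsum_sub n f g : fsum n (fun i => f i - g i) = fsum n f - fsum n g.
Proof. elim: n => [|n IH] /=; [ring | rewrite IH; ring]. Qed.

Lemma fsum_opp n f : fsum n (fun i => - f i) = - fsum n f.
Proof. elim: n => [|n IH] /=; [ring | rewrite IH; ring]. Qed.

Lemma fsum_mull n c f : c * fsum n f = fsum n (fun i => c * f i).
Proof. elim: n => [|n IH] /=; [ring | rewrite -IH; ring]. Qed.

Lemma fsum_mulr n c f : fsum n f * c = fsum n (fun i => f i * c).
Proof. elim: n => [|n IH] /=; [ring | rewrite -IH; ring]. Qed.

Lemma fsum_zero n f : (forall i, (i < n)%coq_nat -> f i = 0) -> fsum n f = 0.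
Proof. move=> H; rewrite (fsum_ext n f (fun _ => 0)) //; elim: n {H} => //= n ->; ring. Qed.

Lemma fsum_swap n m f :
  fsum n (fun i => fsum m (fun j => f i j)) = fsum m (fun j => fsum n (fun i => f i j)).
Proof. elim: n => [|n IH] /=; [by rewrite fsum_zero | by rewrite IH -fsum_add]. Qed.

Lemma fsum_swap3 n f :
  fsum n (fun a => fsum n (fun b => fsum n (fun c => f a b c))) =
  fsum n (fun b => fsum n (fun c => fsum n (fun a => f a b c))).
Proof.
rewrite (fsum_swap n n (fun a b => fsum n (fun c => f a b c))).
by apply: fsum_ext => b _; apply: fsum_swap.
Qed.

Lemma fsum_delta n k f : (k < n)%coq_nat ->
  fsum n (fun i => if Nat.eqb i k then f i else 0) = f k.
Proof.
elim: n => [|n IH] Hk /=; first lia.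
case: (Nat.eq_dec k n) => [->|Hne].
  rewrite Nat.eqb_refl fsum_zero; first ring.
  by move=> i Hi; case: (Nat.eqb_spec i n) => //; lia.
have -> : Nat.eqb n k = false by apply/Nat.eqb_neq; lia.
rewrite IH; [ring | lia].
Qed.

Lemma fsum_shift n f : fsum (S n) f = f O + fsum n (fun i => f (S i)).
Proof. elim: n => [|n IH] /=; [ring | rewrite /= in IH; rewrite IH; ring]. Qed.

Lemma fsum_restrict q n f : (q <= n)%coq_nat ->
  fsum q f = fsum n (fun p => if Nat.ltb p q then f p else 0).
Proof.
elim: n => [|n IH] Hq /=; first by have -> : q = O by lia.
case: (Nat.eq_dec q (S n)) => [->|Hne].
  have -> : Nat.ltb n (S n) = true by apply/Nat.ltb_lt; lia.
  congr (_ + _); apply: fsum_ext => i Hi.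
  by have -> : Nat.ltb i (S n) = true by apply/Nat.ltb_lt; lia.
have -> : Nat.ltb n q = false by apply/Nat.ltb_ge; lia.
rewrite -IH; [ring | lia].
Qed.

Lemma fprod_restrict q n f : (q <= n)%coq_nat ->
  fprod q f = fprod n (fun p => if Nat.ltb p q then f p else 1).
Proof.
elim: n => [|n IH] Hq /=; first by have -> : q = O by lia.
case: (Nat.eq_dec q (S n)) => [->|Hne].
  have -> : Nat.ltb n (S n) = true by apply/Nat.ltb_lt; lia.
  congr (_ * _); apply: fprod_ext => i Hi.
  by have -> : Nat.ltb i (S n) = true by apply/Nat.ltb_lt; lia.
have -> : Nat.ltb n q = false by apply/Nat.ltb_ge; lia.
rewrite -IH; [ring | lia].
Qed.

Lemma fprod_zero n f k : (k < n)%coq_nat -> f k = 0 -> fprod n f = 0.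
Proof.
elim: n => [|n IH] Hk Hf /=; first lia.
case: (Nat.eq_dec k n) => [<-|Hne]; first by rewrite Hf; ring.
rewrite IH //; [ring | lia].
Qed.

Lemma fprod_eq0 n f : fprod n f = 0 -> exists k, (k < n)%coq_nat /\ f k = 0.
Proof.
elim: n => [|n IH] /=; first lra.
move=> /Rmult_integral [/IH [k [Hk Hf]] | H]; first by exists k; split => //; lia.
by exists n; split => //; lia.
Qed.

Lemma fprod_neq0 n f : (forall k, (k < n)%coq_nat -> f k <> 0) -> fprod n f <> 0.
Proof. by move=> H /fprod_eq0 [k [Hk Hf]]; apply: H Hk Hf. Qed.

Lemma fprod_pos n f : (forall k, (k < n)%coq_nat -> 0 < f k) -> 0 < fprod n f.
Proof.
elim: n => [|n IH] H /=; first lra.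
apply: Rmult_lt_0_compat; [apply: IH => k Hk | ]; apply: H; lia.
Qed.

Lemma fprod_one m : fprod m (fun _ => 1) = 1.
Proof. by elim: m => //= m ->; ring. Qed.

Lemma fprod_mul n f g : fprod n f * fprod n g = fprod n (fun m => f m * g m).
Proof. elim: n => [|n IH] /=; [ring | rewrite -IH; ring]. Qed.

Lemma fprod_sq n f : fprod n f ^ 2 = fprod n (fun k => f k ^ 2).
Proof. rewrite /pow !Rmult_1_r fprod_mul; apply: fprod_ext => k _; ring. Qed.

Lemma fprod_swap n m f :
  fprod n (fun i => fprod m (fun j => f i j)) = fprod m (fun j => fprod n (fun i => f i j)).
Proof. elim: n => [|n IH] /=; [by rewrite fprod_one | by rewrite IH fprod_mul]. Qed.

Lemma fprod_factor n f l : (l < n)%coq_nat ->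
  fprod n f = f l * fprod n (fun m => if Nat.eqb m l then 1 else f m).
Proof.
elim: n => [|n IH] Hl /=; first lia.
case: (Nat.eq_dec l n) => [->|Hne].
  rewrite Nat.eqb_refl (fprod_ext n _ f); first ring.
  by move=> i Hi; case: (Nat.eqb_spec i n) => //; lia.
have -> : Nat.eqb n l = false by apply/Nat.eqb_neq; lia.
rewrite IH; [ring | lia].
Qed.

Lemma fsum_big n f : fsum n f = (\sum_(i < n) f (nat_of_ord i))%R.
Proof. by elim: n => [|n IH] /=; [rewrite big_ord0 | rewrite big_ord_recr /= IH]. Qed.

Lemma fprod_big n f : fprod n f = (\prod_(i < n) f (nat_of_ord i))%R.
Proof. by elim: n => [|n IH] /=; [rewrite big_ord0 | rewrite big_ord_recr /= IH]. Qed.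

(* A selector [s : nat -> bool] marks the roots that are
   divided out of prod_{m<n} (X - x_m); [dcoef n x s i] is the coefficient of
   X^i of the quotient and [deval n x s X] its value at X. *)

Definition single (l : nat) : nat -> bool := fun m => Nat.eqb m l.
Definition extend (s : nat -> bool) (k : nat) : nat -> bool := fun m => s m || Nat.eqb m k.

(* coefficients of X * p, from those of p *)
Definition shift_coef (c : nat -> R) (i : nat) : R :=
  match i with O => 0 | S i' => c i' end.

Fixpoint dcoef (n : nat) (x : nat -> R) (s : nat -> bool) (i : nat) : R :=
  match n with
  | O => if Nat.eqb i 0 then 1 else 0
  | S m => if s m then dcoef m x s i else shift_coef (dcoef m x s) i - x m * dcoef m x s i
  end.

Definition deval (n : nat) (x : nat -> R) (s : nat -> bool) (X : R) : R :=
  fprod n (fun m => if s m then 1 else X - x m).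

Lemma coefx_dcoef n x i : coefx n x i = dcoef n x (fun _ => false) i.
Proof. by elim: n i => [|n IH] i //=; case: i => [|i] /=; rewrite ?IH. Qed.

Lemma extend_none k : extend (fun _ => false) k = single k.
Proof. by apply: functional_extensionality. Qed.

Lemma extend_single_comm l k : extend (single l) k = extend (single k) l.
Proof.
apply: functional_extensionality => m; rewrite /extend /single.
by case: (Nat.eqb m l); case: (Nat.eqb m k).
Qed.

Lemma dcoef_ext_sel n x s s' i : (forall m, (m < n)%coq_nat -> s m = s' m) ->
  dcoef n x s i = dcoef n x s' i.
Proof.
elim: n i => [|n IH] i H //=.
have H' : forall m, (m < n)%coq_nat -> s m = s' m by move=> m Hm; apply: H; lia.
rewrite H; last lia.
by case: (s' n); [ | case: i => [|i] /=]; rewrite !(IH _ H').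
Qed.

Lemma dcoef_ext_pts n x y s i : (forall m, (m < n)%coq_nat -> x m = y m) ->
  dcoef n x s i = dcoef n y s i.
Proof.
elim: n i => [|n IH] i H //=.
have H' : forall m, (m < n)%coq_nat -> x m = y m by move=> m Hm; apply: H; lia.
rewrite H; last lia.
by case: (s n); [ | case: i => [|i] /=]; rewrite !(IH _ H').
Qed.

Lemma dcoef_above_deg n x s i : (n < i)%coq_nat -> dcoef n x s i = 0.
Proof.
elim: n i => [|n IH] i Hi /=; first by case: i Hi => //; lia.
case: (s n); first by apply: IH; lia.
rewrite IH; last lia.
by case: i Hi => [|i] Hi /=; [lia | rewrite IH; [ring | lia]].
Qed.

Lemma dcoef_deflated_top n x s l : (l < n)%coq_nat -> s l = true -> dcoef n x s n = 0.
Proof.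
elim: n l => [|n IH] l Hl Hs /=; first lia.
case: (Nat.eq_dec l n) => [<-|Hne].
  by rewrite Hs; apply: dcoef_above_deg; lia.
have Hn : dcoef n x s n = 0 by apply: (IH l) => //; lia.
case: (s n); first by apply: dcoef_above_deg; lia.
by rewrite /= Hn dcoef_above_deg; [ring | lia].
Qed.

Lemma dcoef_monic n x : dcoef n x (fun _ => false) n = 1.
Proof. by elim: n => [|n IH] //=; rewrite IH dcoef_above_deg; [ring | lia]. Qed.

Lemma dcoef_eval n x s X : fsum (S n) (fun i => dcoef n x s i * X ^ i) = deval n x s X.
Proof.
elim: n => [|n IH]; first by rewrite /= /deval /=; ring.
have -> : deval (S n) x s X = deval n x s X * (if s n then 1 else X - x n) by [].
have Htop : dcoef n x s (S n) = 0 by apply: dcoef_above_deg; lia.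
case Hs: (s n).
  rewrite (fsum_ext _ _ (fun i => dcoef n x s i * X ^ i)); last by move=> i _; rewrite /= Hs.
  by rewrite /= -IH /= Htop; ring.
rewrite (fsum_ext _ _ (fun i => shift_coef (dcoef n x s) i * X ^ i -
                              x n * (dcoef n x s i * X ^ i))); last first.
  by move=> i _; rewrite /= Hs; ring.
rewrite fsum_sub -fsum_mull fsum_shift.
rewrite (fsum_ext _ (fun i => shift_coef (dcoef n x s) (S i) * X ^ (S i))
                    (fun i => X * (dcoef n x s i * X ^ i))); last by move=> * /=; ring.
rewrite -fsum_mull -IH /= Htop; ring.
Qed.

(* Once a root is divided out, the top coefficient vanishes. *)
Lemma dcoef_eval_deflated n x s X l : (l < n)%coq_nat -> s l = true ->
  fsum n (fun i => dcoef n x s i * X ^ i) = deval n x s X.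
Proof. by move=> Hl Hs; rewrite -dcoef_eval /= (dcoef_deflated_top n x s l) //; ring. Qed.

Lemma deval_factor n x s X l : (l < n)%coq_nat -> s l = false ->
  deval n x s X = (X - x l) * deval n x (extend s l) X.
Proof.
move=> Hl Hs; rewrite /deval (fprod_factor _ _ l Hl) Hs; congr (_ * _).
by apply: fprod_ext => m Hm; rewrite /extend; case: (Nat.eqb m l); case: (s m).
Qed.

Lemma deval_root n x k : (k < n)%coq_nat -> deval n x (fun _ => false) (x k) = 0.
Proof. by move=> Hk; apply: (fprod_zero _ _ k Hk); ring. Qed.

(* Ordered root lists.  [roots n a] is a choice of ordered roots; the lemmas
   below show it is the only one, so that on D everything can be computed from
   any ordered root list of [a]. *)

Definition increasing_seq (n : nat) (x : nat -> R) : Prop :=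
  forall k, (S k < n)%coq_nat -> x k < x (S k).

Lemma increasing_lt n x : increasing_seq n x ->
  forall p q, (p < q)%coq_nat -> (q < n)%coq_nat -> x p < x q.
Proof.
move=> Hx p q Hpq; elim: q Hpq => [|q IH] Hpq Hq; first lia.
case: (Nat.eq_dec p q) => [->|Hne]; first by apply: Hx.
by apply: Rlt_trans (IH _ _) (Hx _ _); lia.
Qed.

Lemma increasing_le n x : increasing_seq n x ->
  forall p q, (p <= q)%coq_nat -> (q < n)%coq_nat -> x p <= x q.
Proof.
move=> Hx p q Hpq Hq; case: (Nat.eq_dec p q) => [->|Hne]; first lra.
by apply: Rlt_le; apply: (increasing_lt n) => //; lia.
Qed.

Lemma increasing_neq n x : increasing_seq n x ->
  forall k l, (k < n)%coq_nat -> (l < n)%coq_nat -> k <> l -> x k - x l <> 0.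
Proof.
move=> Hx k l Hk Hl Hne; case: (Nat.lt_ge_cases k l) => H.
  by have := increasing_lt n x Hx k l H Hl; lra.
by have := increasing_lt n x Hx l k ltac:(lia) Hk; lra.
Qed.

(* P'(x_k) = prod_{m <> k} (x_k - x_m) does not vanish at a simple root. *)
Lemma deval_single_neq0 n x k : increasing_seq n x -> (k < n)%coq_nat ->
  deval n x (single k) (x k) <> 0.
Proof.
move=> Hx Hk; apply: fprod_neq0 => m Hm; rewrite /single.
case: (Nat.eqb_spec m k) => [_|Hne]; first lra.
by have := increasing_neq n x Hx k m Hk Hm (nesym Hne); lra.
Qed.

Lemma Peval_deval n a x : is_ordered_roots n a x ->
  forall X, Peval n a X = deval n x (fun _ => false) X.
Proof.
move=> [_ Ha] X; rewrite -dcoef_eval /= dcoef_monic /Peval.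
rewrite (fsum_ext n _ (fun i => dcoef n x (fun _ => false) i * X ^ i)); first ring.
by move=> i Hi; rewrite Ha // coefx_dcoef.
Qed.

Lemma pow_expr (x : R) k : x ^ k = (x ^+ k)%R.
Proof. by elim: k => [|k IH] //=; rewrite GRing.exprS IH. Qed.

Lemma poly_vanishing n (z d : nat -> R) : increasing_seq n z ->
  (forall k, (k < n)%coq_nat -> fsum n (fun i => d i * z k ^ i) = 0) ->
  forall i, (i < n)%coq_nat -> d i = 0.
Proof.
move=> Hz Hr i Hi.
pose p : {poly R} := (\poly_(i < n) d i)%R.
pose rs := [seq z k | k <- iota 0 n].
have Hroot : all (root p) rs.
  apply/allP => y /mapP [k Hk ->]; rewrite mem_iota add0n in Hk.
  apply/eqP; rewrite horner_poly; apply: (etrans _ (Hr k (ltP Hk))).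
  by rewrite fsum_big; apply: eq_bigr => m _; rewrite pow_expr.
have Huniq : uniq rs.
  rewrite map_inj_in_uniq ?iota_uniq // => k1 k2; rewrite !mem_iota !add0n => H1 H2 Heq.
  apply/eqP; case: (ltngtP k1 k2) => // H.
  - by have := increasing_lt n z Hz k1 k2 (ltP H) (ltP H2); rewrite Heq; lra.
  - by have := increasing_lt n z Hz k2 k1 (ltP H) (ltP H1); rewrite Heq; lra.
have Hp0 : p = 0%R.
  by apply: (roots_geq_poly_eq0 Hroot Huniq); rewrite size_map size_iota size_poly.
have := congr1 (fun q : {poly R} => (q`_i)%R) Hp0.
rewrite coef_poly /=; case: ltnP => [_|]; last by move/leP; lia.
by rewrite polyseq0 nth_nil.
Qed.

Lemma ordered_roots_of n c z : increasing_seq n z ->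
  (forall k, (k < n)%coq_nat -> Peval n c (z k) = 0) -> is_ordered_roots n c z.
Proof.
move=> Hz Hr; split => // i Hi.
apply: Rminus_diag_uniq; apply: (poly_vanishing n z (fun i => c i - coefx n z i)) => // k Hk.
have := Hr k Hk; have := deval_root n z k Hk; rewrite -dcoef_eval /= dcoef_monic /Peval.
rewrite (fsum_ext n (fun i => (c i - coefx n z i) * z k ^ i)
  (fun i => c i * z k ^ i - dcoef n z (fun _ => false) i * z k ^ i)).
  by rewrite fsum_sub; lra.
by move=> m _; rewrite coefx_dcoef; ring.
Qed.

(* Two increasing lists with the same set of values coincide: by induction on
   k, the value v_k = u_m cannot have m < k, so u_k <= v_k, and symmetrically. *)
Lemma increasing_le_of_image n u v : increasing_seq n u -> increasing_seq n v ->
  forall k, (k < n)%coq_nat -> (forall p, (p < k)%coq_nat -> u p = v p) ->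
  (exists m, (m < n)%coq_nat /\ v k = u m) -> u k <= v k.
Proof.
move=> Hu Hv k Hk Hpk [m [Hm Hvm]].
case: (Nat.lt_ge_cases m k) => Hmk.
  by have := increasing_lt n v Hv m k Hmk Hk; rewrite -Hpk // -Hvm; lra.
by rewrite Hvm; apply: increasing_le n u Hu k m Hmk Hm.
Qed.

Lemma increasing_eq_of_image n u v : increasing_seq n u -> increasing_seq n v ->
  (forall k, (k < n)%coq_nat -> exists m, (m < n)%coq_nat /\ v k = u m) ->
  (forall k, (k < n)%coq_nat -> exists m, (m < n)%coq_nat /\ u k = v m) ->
  forall k, (k < n)%coq_nat -> u k = v k.
Proof.
move=> Hu Hv Hvu Huv.
suff H : forall k p, (p < k)%coq_nat -> (p < n)%coq_nat -> u p = v p.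
  by move=> k Hk; apply: (H (S k)) => //; lia.
elim => [|k IH] p Hp Hpn; first lia.
case: (Nat.eq_dec p k) => [Hpk|Hne]; last by apply: IH => //; lia.
subst p.
have Hbelow : forall q, (q < k)%coq_nat -> u q = v q by move=> q Hq; apply: IH => //; lia.
apply: Rle_antisym.
  exact: (increasing_le_of_image n u v Hu Hv k Hpn Hbelow (Hvu k Hpn)).
apply: (increasing_le_of_image n v u Hv Hu k Hpn _ (Huv k Hpn)).
by move=> q Hq; rewrite Hbelow.
Qed.

Lemma ordered_roots_unique n b z w : is_ordered_roots n b z -> is_ordered_roots n b w ->
  forall k, (k < n)%coq_nat -> z k = w k.
Proof.
move=> Hz Hw.
have Hroot : forall u v, is_ordered_roots n b u -> is_ordered_roots n b v ->
    forall k, (k < n)%coq_nat -> exists m, (m < n)%coq_nat /\ v k = u m.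
  move=> u v Hu Hv k Hk.
  have := deval_root n v k Hk.
  rewrite -(Peval_deval _ _ _ Hv) (Peval_deval _ _ _ Hu) => /fprod_eq0 [m [Hm Hf]].
  by exists m; split => //; lra.
by apply: increasing_eq_of_image (proj1 Hz) (proj1 Hw) (Hroot _ _ Hz Hw) (Hroot _ _ Hw Hz).
Qed.

Lemma roots_spec n b : inD n b -> is_ordered_roots n b (roots n b).
Proof. by move=> [z Hz]; rewrite /roots; apply: (epsilon_spec _ _ (ex_intro _ z Hz)). Qed.

Lemma roots_eq n a x : is_ordered_roots n a x -> forall k, (k < n)%coq_nat -> roots n a k = x k.
Proof. by move=> Hx; apply: ordered_roots_unique (roots_spec _ _ (ex_intro _ x Hx)) Hx. Qed.

Lemma deriv1_eq f t l : derivable_pt_lim f t l -> deriv1 f t = l.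
Proof.
move=> H; rewrite /deriv1.
have H2 := epsilon_spec (inhabits 0) (fun l => derivable_pt_lim f t l) (ex_intro _ l H).
exact: uniqueness_limite _ _ _ _ H2 H.
Qed.

Lemma dlim_val f x l1 l2 : derivable_pt_lim f x l1 -> l1 = l2 -> derivable_pt_lim f x l2.
Proof. by move=> H <-. Qed.

Lemma dlim_fun f g x l : (forall t, f t = g t) -> derivable_pt_lim g x l -> derivable_pt_lim f x l.
Proof. by move=> H; have -> : f = g by apply: functional_extensionality. Qed.

Lemma fsum_deriv n F F' t0 :
  (forall m, (m < n)%coq_nat -> derivable_pt_lim (F m) t0 (F' m)) ->
  derivable_pt_lim (fun t => fsum n (fun m => F m t)) t0 (fsum n F').
Proof.
elim: n => [|n IH] H /=; first exact: derivable_pt_lim_const.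
by apply: derivable_pt_lim_plus; [apply: IH => m Hm | ]; apply: H; lia.
Qed.

Lemma fprod_deriv n F F' t0 :
  (forall m, (m < n)%coq_nat -> derivable_pt_lim (F m) t0 (F' m)) ->
  derivable_pt_lim (fun t => fprod n (fun m => F m t)) t0
    (fsum n (fun l => F' l * fprod n (fun m => if Nat.eqb m l then 1 else F m t0))).
Proof.
elim: n => [|n IH] H /=; first exact: derivable_pt_lim_const.
apply: dlim_val.
  by apply: derivable_pt_lim_mult; [apply: IH => m Hm | ]; apply: H; lia.
rewrite Nat.eqb_refl fsum_mulr (fprod_ext n _ (fun m => F m t0)); last first.
  by move=> m Hm; case: (Nat.eqb_spec m n) => // ?; lia.
congr (_ + _); last ring.
apply: fsum_ext => l Hl; have -> : Nat.eqb n l = false by apply/Nat.eqb_neq; lia.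
ring.
Qed.

Lemma fprod_deriv_log n F F' t0 :
  (forall m, (m < n)%coq_nat -> derivable_pt_lim (F m) t0 (F' m)) ->
  (forall m, (m < n)%coq_nat -> F m t0 <> 0) ->
  derivable_pt_lim (fun t => fprod n (fun m => F m t)) t0
    (fprod n (fun m => F m t0) * fsum n (fun l => F' l / F l t0)).
Proof.
move=> H Hnz; apply: dlim_val; first exact: (fprod_deriv _ _ _ _ H).
rewrite fsum_mull; apply: fsum_ext => l Hl.
rewrite (fprod_factor n (fun m => F m t0) l Hl); field; exact: Hnz.
Qed.

Lemma upd_same z l : upd z l (z l) = z.
Proof. by apply: functional_extensionality => m; rewrite /upd; case: (Nat.eqb_spec m l) => [->|]. Qed.

Lemma upd_deriv z l k t0 :
  derivable_pt_lim (fun t => upd z l t k) t0 (if Nat.eqb k l then 1 else 0).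
Proof.
rewrite /upd; case: (Nat.eqb k l); [exact: derivable_pt_lim_id | exact: derivable_pt_lim_const].
Qed.

Lemma deval_deriv n x s Y :
  derivable_pt_lim (deval n x s) Y (fsum n (fun k => if s k then 0 else deval n x (extend s k) Y)).
Proof.
apply: dlim_val.
  apply: (fprod_deriv n (fun m Y => if s m then 1 else Y - x m) (fun m => if s m then 0 else 1)).
  move=> m _; case: (s m); first exact: derivable_pt_lim_const.
  apply: dlim_val; first exact: (derivable_pt_lim_minus _ _ _ _ _
    (derivable_pt_lim_id Y) (derivable_pt_lim_const (x m) Y)).
  ring.
apply: fsum_ext => k _; case: (s k); first ring.
rewrite Rmult_1_l; apply: fprod_ext => m _; rewrite /extend.
by case: (Nat.eqb m k); case: (s m).
Qed.

Lemma Peval_derivable n b X : exists l, derivable_pt_lim (Peval n b) X l.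
Proof.
eexists; apply: (derivable_pt_lim_plus (fun X => X ^ n)); first exact: derivable_pt_lim_pow.
apply: (fsum_deriv n (fun i Y => b i * Y ^ i)) => m _.
exact: (derivable_pt_lim_mult _ _ X _ _ (derivable_pt_lim_const (b m) X) (derivable_pt_lim_pow X m)).
Qed.

Lemma dcoef_deriv n Y Y' s t0 :
  (forall k, (k < n)%coq_nat -> derivable_pt_lim (fun t => Y t k) t0 (Y' k)) ->
  forall i, derivable_pt_lim (fun t => dcoef n (Y t) s i) t0
    (fsum n (fun k => if s k then 0 else - Y' k * dcoef n (Y t0) (extend s k) i)).
Proof.
elim: n => [|n IH] HY i /=; first exact: derivable_pt_lim_const.
have HY' : forall k, (k < n)%coq_nat -> derivable_pt_lim (fun t => Y t k) t0 (Y' k).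
  by move=> k Hk; apply: HY; lia.
have Hlast : forall k, (k < n)%coq_nat -> extend s k n = s n.
  move=> k Hk; rewrite /extend.
  have -> : Nat.eqb n k = false by apply/Nat.eqb_neq; lia.
  by rewrite orbF.
rewrite (fsum_ext n _ (fun k => if s k then 0 else - Y' k * (if s n then
    dcoef n (Y t0) (extend s k) i else shift_coef (dcoef n (Y t0) (extend s k)) i -
    Y t0 n * dcoef n (Y t0) (extend s k) i))); last by move=> k Hk /=; rewrite Hlast.
case Hs: (s n).
  rewrite Rplus_0_r; exact: IH.
have Hn : dcoef n (Y t0) (extend s n) i = dcoef n (Y t0) s i.
  apply: dcoef_ext_sel => m Hm; rewrite /extend.
  have -> : Nat.eqb m n = false by apply/Nat.eqb_neq; lia.
  by rewrite orbF.
rewrite Hn.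
have Hshift : derivable_pt_lim (fun t => shift_coef (dcoef n (Y t) s) i) t0
    (fsum n (fun k => if s k then 0 else - Y' k * shift_coef (dcoef n (Y t0) (extend s k)) i)).
  case: i {Hn} => [|i] /=; last exact: IH.
  apply: dlim_val; first exact: derivable_pt_lim_const.
  by rewrite fsum_zero // => k _; case: (s k) => //; ring.
apply: dlim_val.
  by apply: derivable_pt_lim_minus Hshift (derivable_pt_lim_mult _ _ _ _ _ (HY n _) (IH HY' i)).
rewrite [X in _ = X + _](fsum_ext n _ (fun k =>
    (if s k then 0 else - Y' k * shift_coef (dcoef n (Y t0) (extend s k)) i) -
    Y t0 n * (if s k then 0 else - Y' k * dcoef n (Y t0) (extend s k) i))).
  have -> : extend s n n = true by rewrite /extend Nat.eqb_refl orbT.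
  rewrite fsum_sub -fsum_mull; ring.
by move=> k _; case: (s k); ring.
Qed.

Lemma pd_coefx n z i l : (l < n)%coq_nat ->
  pd (fun y => coefx n y i) z l = - dcoef n z (single l) i.
Proof.
move=> Hl; rewrite /pd; apply: deriv1_eq.
apply: (dlim_fun _ (fun t => dcoef n (upd z l t) (fun _ => false) i)).
  by move=> t; rewrite coefx_dcoef.
apply: dlim_val; first by apply: dcoef_deriv => k _; exact: upd_deriv.
rewrite upd_same (fsum_ext n _ (fun k => if Nat.eqb k l then - dcoef n z (single k) i else 0)).
  exact: (fsum_delta n l (fun k => - dcoef n z (single k) i)).
by move=> k _; rewrite extend_none; case: (Nat.eqb k l); ring.
Qed.

Lemma G_gram n i j b : G n i j b =
  fsum n (fun l => dcoef n (roots n b) (single l) i * dcoef n (roots n b) (single l) j).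
Proof. by rewrite /G /GammaE; apply: fsum_ext => l Hl; rewrite !pd_coefx //; ring. Qed.

(* Changing a_j to t
   adds (t - a_j) X^j to P; for t close to a_j the sign of P at the ends of
   small windows around each root is unchanged, so by the intermediate value
   theorem each window still contains a root.  This gives continuity of the
   ordered roots, and the root equation then yields their derivative
   d x_k / d a_j = - x_k^j / P'(x_k). *)

Lemma Peval_upd n a j t X : (j < n)%coq_nat ->
  Peval n (upd a j t) X = Peval n a X + (t - a j) * X ^ j.
Proof.
move=> Hj; rewrite /Peval.
rewrite (fsum_ext n _ (fun i => a i * X ^ i + (if Nat.eqb i j then (t - a j) * X ^ i else 0))).
  by rewrite fsum_add (fsum_delta n j (fun i => (t - a j) * X ^ i)) //; ring.
by move=> i _; rewrite /upd; case: (Nat.eqb_spec i j) => [->|_]; ring.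
Qed.

Lemma fin_min N (f : nat -> R) : (forall k, (k < N)%coq_nat -> 0 < f k) ->
  exists m, 0 < m /\ forall k, (k < N)%coq_nat -> m <= f k.
Proof.
elim: N => [|N IH] H; first by exists 1; split; [lra | move=> k Hk; lia].
have [m [Hm Hmk]] : exists m, 0 < m /\ forall k, (k < N)%coq_nat -> m <= f k.
  by apply: IH => k Hk; apply: H; lia.
exists (Rmin m (f N)); split; first by apply: Rmin_pos => //; apply: H; lia.
move=> k Hk; case: (Nat.eq_dec k N) => [->|Hne]; first exact: Rmin_r.
by apply: Rle_trans (Rmin_l _ _) (Hmk _ _); lia.
Qed.

Lemma fin_max N (f : nat -> R) : exists B, 0 < B /\ forall k, (k < N)%coq_nat -> f k <= B.
Proof.
elim: N => [|N [B [HB HBk]]]; first by exists 1; split; [lra | move=> k Hk; lia].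
exists (Rmax B (f N)); split; first exact: Rlt_le_trans HB (Rmax_l _ _).
move=> k Hk; case: (Nat.eq_dec k N) => [->|Hne]; first exact: Rmax_r.
by apply: Rle_trans (HBk _ _) (Rmax_l _ _); lia.
Qed.

Lemma gap_exists n x : increasing_seq n x ->
  exists g, 0 < g /\ forall p q, (p < q)%coq_nat -> (q < n)%coq_nat -> g <= x q - x p.
Proof.
move=> Hx.
have [g [Hg Hk]] := fin_min (Nat.pred n) (fun k => x (S k) - x k)
  (fun k Hk => ltac:(have := Hx k ltac:(lia); lra)).
exists g; split => // p q Hpq Hq.
by have := Hk p ltac:(lia); have := increasing_le n x Hx (S p) q ltac:(lia) Hq; lra.
Qed.

Lemma deval_sign_change n x k e : (k < n)%coq_nat -> 0 < e ->
  (forall m, (m < n)%coq_nat -> m <> k -> e < Rabs (x k - x m)) ->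
  deval n x (fun _ => false) (x k - e) * deval n x (fun _ => false) (x k + e) < 0.
Proof.
move=> Hk He Hg.
rewrite !(deval_factor n x (fun _ => false) _ k Hk) // !extend_none.
have Hpos : 0 < deval n x (single k) (x k - e) * deval n x (single k) (x k + e).
  rewrite /deval fprod_mul; apply: fprod_pos => m Hm; rewrite /single.
  case: (Nat.eqb_spec m k) => [_|Hne]; first lra.
  by have := Hg m Hm Hne; split_Rabs; nra.
set A := deval n x (single k) (x k - e) * deval n x (single k) (x k + e) in Hpos.
have -> : (x k - e - x k) * deval n x (single k) (x k - e) *
    ((x k + e - x k) * deval n x (single k) (x k + e)) = - ((e * e) * A) by rewrite /A; ring.
by have := Rmult_lt_0_compat _ _ (Rmult_lt_0_compat _ _ He He) Hpos; lra.
Qed.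

Lemma window_sign_change n a x g e : is_ordered_roots n a x -> 0 < e ->
  (forall p q, (p < q)%coq_nat -> (q < n)%coq_nat -> g <= x q - x p) -> e <= g / 3 ->
  forall k, (k < n)%coq_nat -> Peval n a (x k - e) * Peval n a (x k + e) < 0.
Proof.
move=> Hx He Hgap He2 k Hk.
rewrite !(Peval_deval _ _ _ Hx); apply: deval_sign_change => // m Hm Hne.
case: (Nat.lt_ge_cases m k) => H.
  by have := Hgap m k H Hk; split_Rabs; lra.
by have := Hgap k m ltac:(lia) Hm; split_Rabs; lra.
Qed.

Lemma same_sign p h : Rabs h < Rabs p -> 0 < (p + h) * p.
Proof. by split_Rabs; nra. Qed.

Lemma Peval_upd_same_sign n a j t Y : (j < n)%coq_nat ->
  Rabs (t - a j) * Rabs (Y ^ j) < Rabs (Peval n a Y) ->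
  0 < Peval n (upd a j t) Y * Peval n a Y.
Proof. by move=> Hj H; rewrite Peval_upd //; apply: same_sign; rewrite Rabs_mult. Qed.

Lemma roots_in_windows n b x e : 0 < e ->
  (forall k, (S k < n)%coq_nat -> x k + e < x (S k) - e) ->
  (forall k, (k < n)%coq_nat -> Peval n b (x k - e) * Peval n b (x k + e) < 0) ->
  exists z, is_ordered_roots n b z /\ forall k, (k < n)%coq_nat -> Rabs (z k - x k) <= e.
Proof.
move=> He Hsep Hsign.
have Hcont : continuity (Peval n b).
  move=> Y; have [l Hl] := Peval_derivable n b Y.
  exact: derivable_continuous_pt _ _ (exist _ l Hl).
pose Q k y := x k - e <= y <= x k + e /\ Peval n b y = 0.
pose z k := epsilon (inhabits 0) (Q k).
have Hz : forall k, (k < n)%coq_nat -> Q k (z k).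
  move=> k Hk; apply: epsilon_spec.
  have [y Hy] := IVT_cor _ (x k - e) (x k + e) Hcont ltac:(lra) (Rlt_le _ _ (Hsign k Hk)).
  by exists y.
have Hzinc : increasing_seq n z.
  move=> k Hk; have [[_ H1] _] := Hz k ltac:(lia); have [[H2 _] _] := Hz (S k) Hk.
  by have := Hsep k Hk; lra.
exists z; split; first by apply: ordered_roots_of => // k Hk; case: (Hz k Hk).
by move=> k Hk; have [[H1 H2] _] := Hz k Hk; split_Rabs; lra.
Qed.

Lemma roots_perturb n a x j : is_ordered_roots n a x -> (j < n)%coq_nat ->
  forall eps, 0 < eps -> exists del, 0 < del /\ forall t, Rabs (t - a j) < del ->
  is_ordered_roots n (upd a j t) (roots n (upd a j t)) /\
  forall k, (k < n)%coq_nat -> Rabs (roots n (upd a j t) k - x k) < eps.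
Proof.
move=> Hx Hj eps Heps.
have [g [Hg Hgap]] := gap_exists n x (proj1 Hx).
pose e := Rmin (eps / 2) (g / 3).
have He : 0 < e by apply: Rmin_pos; lra.
have He1 : e <= eps / 2 by apply: Rmin_l.
have He2 : e <= g / 3 by apply: Rmin_r.
have Hsg := window_sign_change n a x g e Hx He Hgap ltac:(lra).
have Hends : forall k, (k < n)%coq_nat ->
    0 < Rmin (Rabs (Peval n a (x k - e))) (Rabs (Peval n a (x k + e))).
  move=> k Hk; have := Hsg k Hk => H.
  by apply: Rmin_pos; apply: Rabs_pos_lt => H0; rewrite H0 in H; lra.
(* |P| >= M and |Y^j| <= B at all window ends *)
have [M [HM HMk]] := fin_min n _ Hends.
have [B [HB HBk]] := fin_max n (fun k => Rmax (Rabs ((x k - e) ^ j)) (Rabs ((x k + e) ^ j))).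
exists (M / B); split; first exact: Rdiv_lt_0_compat.
move=> t Ht.
have HtB : Rabs (t - a j) * B < M.
  have := Rmult_lt_compat_r B _ _ HB Ht; rewrite /Rdiv Rmult_assoc Rinv_l; lra.
have Hstable : forall Y, Rabs (Y ^ j) <= B -> M <= Rabs (Peval n a Y) ->
    0 < Peval n (upd a j t) Y * Peval n a Y.
  move=> Y HY HPY; apply: Peval_upd_same_sign => //.
  by have := Rmult_le_compat_l _ _ _ (Rabs_pos (t - a j)) HY; lra.
have [z [Hz Hclose]] : exists z, is_ordered_roots n (upd a j t) z /\
    forall k, (k < n)%coq_nat -> Rabs (z k - x k) <= e.
  apply: roots_in_windows => // k Hk.
    by have := Hgap k (S k) ltac:(lia) Hk; lra.
  have Hm := Hstable (x k - e) (Rle_trans _ _ _ (Rmax_l _ _) (HBk k Hk))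
    (Rle_trans _ _ _ (HMk k Hk) (Rmin_l _ _)).
  have Hp := Hstable (x k + e) (Rle_trans _ _ _ (Rmax_r _ _) (HBk k Hk))
    (Rle_trans _ _ _ (HMk k Hk) (Rmin_r _ _)).
  by have := Hsg k Hk; nra.
have Hr := roots_spec n _ (ex_intro _ z Hz).
split => // k Hk; rewrite (ordered_roots_unique _ _ _ _ Hr Hz k Hk).
by have := Hclose k Hk; lra.
Qed.

Lemma perturbed_root_quotient n a x j k h z : is_ordered_roots n a x ->
  (j < n)%coq_nat -> (k < n)%coq_nat -> h <> 0 -> deval n x (single k) z <> 0 ->
  Peval n (upd a j (a j + h)) z = 0 ->
  (z - x k) / h = - z ^ j / deval n x (single k) z.
Proof.
move=> Hx Hj Hk Hh Hpz Hroot.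
rewrite Peval_upd // (Peval_deval _ _ _ Hx) (deval_factor n x _ z k Hk) // extend_none in Hroot.
by field_simplify_eq => //; replace (a j + h - a j) with h in Hroot by ring; lra.
Qed.

Lemma continuity_pt_ball f x0 : continuity_pt f x0 -> forall eps, 0 < eps ->
  exists eta, 0 < eta /\ forall y, Rabs (y - x0) < eta -> Rabs (f y - f x0) < eps.
Proof.
move=> H eps Heps; have [eta [Heta Hf]] := H eps Heps.
exists eta; split => // y Hy.
case: (Req_dec x0 y) => [<-|Hne]; first by rewrite Rminus_diag Rabs_R0.
exact: (Hf y (conj (conj I Hne) Hy)).
Qed.

Lemma roots_deriv n a x j k : is_ordered_roots n a x -> (j < n)%coq_nat -> (k < n)%coq_nat ->
  derivable_pt_lim (fun t => roots n (upd a j t) k) (a j)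
    (- x k ^ j / deval n x (single k) (x k)).
Proof.
move=> Hx Hj Hk.
pose Pk := deval n x (single k).
have HPk : Pk (x k) <> 0 := deval_single_neq0 n x k (proj1 Hx) Hk.
have HPkc : continuity_pt Pk (x k).
  exact: derivable_continuous_pt _ _ (exist _ _ (deval_deriv n x (single k) (x k))).
have Hgc : continuity_pt (fun Y => - Y ^ j / Pk Y) (x k).
  apply: continuity_pt_div => //; apply: continuity_pt_opp.
  exact: derivable_continuous_pt _ _ (exist _ _ (derivable_pt_lim_pow (x k) j)).
move=> eps Heps.
have [eta1 [Heta1 H1]] := continuity_pt_ball _ _ Hgc eps Heps.
have [eta2 [Heta2 H2]] := continuity_pt_ball _ _ HPkc _ (Rabs_pos_lt _ HPk).
have [del [Hdel Hpert]] := roots_perturb n a x j Hx Hj _ (Rmin_pos _ _ Heta1 Heta2).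
exists (mkposreal _ Hdel) => h Hh Hhd /=.
have [Hr Hclose] := Hpert (a j + h) ltac:(by rewrite (_ : a j + h - a j = h) //; ring).
set z := roots n (upd a j (a j + h)) k.
have Hz : Rabs (z - x k) < Rmin eta1 eta2 := Hclose k Hk.
have Hz0 : roots n (upd a j (a j)) k = x k by rewrite upd_same; apply: roots_eq.
have HPkz : Pk z <> 0.
  move=> H0; have := H2 z (Rlt_le_trans _ _ _ Hz (Rmin_r _ _)).
  by rewrite H0 Rminus_0_l Rabs_Ropp; lra.
rewrite Hz0 (perturbed_root_quotient n a x j k h z Hx Hj Hk Hh HPkz).
  exact: H1 z (Rlt_le_trans _ _ _ Hz (Rmin_l _ _)).
by rewrite (Peval_deval _ _ _ Hr); apply: deval_root.
Qed.

(* The quantities of the proof, for an ordered root list x: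
   E_{l i} = [X^i] P/(X - x_l), F_{l k i} = [X^i] P/((X - x_l)(X - x_k)),
   w_{j k} = d x_k / d a_j, and c_k = d log discr / d x_k. *)
Definition Ecoef (n : nat) (x : nat -> R) (l i : nat) : R := dcoef n x (single l) i.
Definition Fcoef (n : nat) (x : nat -> R) (l k i : nat) : R := dcoef n x (extend (single l) k) i.
Definition dxda (n : nat) (x : nat -> R) (j k : nat) : R := - x k ^ j / deval n x (single k) (x k).
Definition dlogdiscr (n : nat) (x : nat -> R) (k : nat) : R :=
  fsum n (fun l => if Nat.eqb l k then 0 else 2 / (x k - x l)).

Definition vdisc (n : nat) (z : nat -> R) : R :=
  fprod n (fun q => fprod q (fun p => (z p - z q) ^ 2)).

Lemma ln_vdisc_deriv n Z Z' t0 : increasing_seq n (Z t0) ->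
  (forall k, (k < n)%coq_nat -> derivable_pt_lim (fun t => Z t k) t0 (Z' k)) ->
  derivable_pt_lim (fun t => ln (vdisc n (Z t))) t0
    (fsum n (fun q => fsum q (fun p => 2 * (Z' p - Z' q) / (Z t0 p - Z t0 q)))).
Proof.
move=> Hinc HZ.
have Hne : forall p q, (p < q)%coq_nat -> (q < n)%coq_nat -> Z t0 p - Z t0 q <> 0.
  by move=> p q Hpq Hq; apply: (increasing_neq n) => //; lia.
pose F q t := fprod q (fun p => (Z t p - Z t q) ^ 2).
have HFnz : forall q, (q < n)%coq_nat -> F q t0 <> 0.
  by move=> q Hq; apply: fprod_neq0 => p Hp; apply: pow_nonzero; apply: Hne.
have HFd : forall q, (q < n)%coq_nat -> derivable_pt_lim (F q) t0
    (F q t0 * fsum q (fun p => 2 * (Z' p - Z' q) / (Z t0 p - Z t0 q))).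
  move=> q Hq; apply: dlim_val.
    apply: (fprod_deriv_log q (fun p t => (Z t p - Z t q) ^ 2)
              (fun p => 2 * (Z t0 p - Z t0 q) * (Z' p - Z' q))).
      move=> p Hp; apply: (dlim_fun _ (fun t => (Z t p - Z t q) * (Z t p - Z t q))).
        by move=> t; ring.
      apply: dlim_val; first by apply: derivable_pt_lim_mult;
        apply: derivable_pt_lim_minus; apply: HZ; lia.
      by cbv beta; ring.
    by move=> p Hp; apply: pow_nonzero; apply: Hne.
  by congr (_ * _); apply: fsum_ext => p Hp; field; apply: Hne.
have HD : 0 < vdisc n (Z t0).
  apply: fprod_pos => q Hq; apply: fprod_pos => p Hp.
  by have := Rsqr_pos_lt _ (Hne p q Hp Hq); rewrite /Rsqr /=; lra.
apply: dlim_val.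
  apply: (derivable_pt_lim_comp (fun t => fprod n (fun q => F q t)) ln).
    exact: fprod_deriv_log HFd HFnz.
  exact: derivable_pt_lim_ln HD.
rewrite -Rmult_assoc Rinv_l; last by apply: Rgt_not_eq.
by rewrite Rmult_1_l; apply: fsum_ext => q Hq; field; apply: HFnz.
Qed.

Lemma pair_sum_by_root n x (w : nat -> R) : increasing_seq n x ->
  fsum n (fun q => fsum q (fun p => 2 * (w p - w q) / (x p - x q))) =
  fsum n (fun k => w k * dlogdiscr n x k).
Proof.
move=> Hx.
have Hne := increasing_neq n x Hx.
have Hsplit : forall k l (A : R), (if Nat.eqb l k then 0 else A) =
    (if Nat.ltb k l then A else 0) + (if Nat.ltb l k then A else 0).
  move=> k l A; case: (Nat.eqb_spec l k) => [->|?]; first by rewrite Nat.ltb_irrefl; ring.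
  by case: (Nat.ltb_spec k l) => ?; case: (Nat.ltb_spec l k) => ?; try lia; ring.
pose below k l := if Nat.ltb k l then 2 * w k / (x k - x l) else 0.
pose above k l := if Nat.ltb l k then 2 * w k / (x k - x l) else 0.
rewrite (fsum_ext n (fun k => w k * dlogdiscr n x k)
    (fun k => fsum n (below k) + fsum n (above k))); last first.
  move=> k Hk; rewrite /dlogdiscr fsum_mull -fsum_add; apply: fsum_ext => l Hl.
  rewrite /below /above -Hsplit.
  by case: (Nat.eqb_spec l k) => _; [ring | rewrite /Rdiv; ring].
rewrite fsum_add (fsum_swap n n below) -fsum_add; apply: fsum_ext => q Hq.
rewrite (fsum_restrict q n) -?fsum_add; last lia.
apply: fsum_ext => p Hp; rewrite /below /above.
case: (Nat.ltb_spec p q) => H; last by ring.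
by field; split; apply: Hne => //; lia.
Qed.

Lemma roots_upd_same n a x j : is_ordered_roots n a x ->
  forall k, (k < n)%coq_nat -> roots n (upd a j (a j)) k = x k.
Proof. by move=> Hx k Hk; rewrite upd_same; apply: roots_eq. Qed.

Lemma pd_ln_discr n a x j : is_ordered_roots n a x -> (j < n)%coq_nat ->
  pd (fun b => ln (discr n b)) a j = fsum n (fun k => dxda n x j k * dlogdiscr n x k).
Proof.
move=> Hx Hj; rewrite /pd -(pair_sum_by_root n x _ (proj1 Hx)); apply: deriv1_eq.
have HZ0 := roots_upd_same n a x j Hx.
apply: dlim_val.
  apply: (ln_vdisc_deriv n (fun t => roots n (upd a j t)) (dxda n x j)).
    by rewrite upd_same; apply: (proj1 (roots_spec n a (ex_intro _ x Hx))).
  by move=> k Hk; apply: roots_deriv.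
by apply: fsum_ext => q Hq; apply: fsum_ext => p Hp; rewrite !HZ0 //; lia.
Qed.

(* d E_{l i} / d a_j, through the motion of the roots. *)
Definition dEcoef (n : nat) (x : nat -> R) (j l i : nat) : R :=
  fsum n (fun k => if single l k then 0 else - dxda n x j k * Fcoef n x l k i).

Lemma pd_G n a x i j : is_ordered_roots n a x -> (j < n)%coq_nat ->
  pd (fun b => G n i j b) a j =
  fsum n (fun l => dEcoef n x j l i * Ecoef n x l j + Ecoef n x l i * dEcoef n x j l j).
Proof.
move=> Hx Hj; rewrite /pd; apply: deriv1_eq.
pose Z t := roots n (upd a j t).
have HZd : forall k, (k < n)%coq_nat -> derivable_pt_lim (fun t => Z t k) (a j) (dxda n x j k).
  by move=> k Hk; apply: roots_deriv.
have HZ0 : forall s m, dcoef n (Z (a j)) s m = dcoef n x s m.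
  by move=> s m; apply: dcoef_ext_pts; apply: roots_upd_same.
apply: (dlim_fun _ (fun t => fsum n (fun l => dcoef n (Z t) (single l) i * dcoef n (Z t) (single l) j))).
  by move=> t; rewrite G_gram.
apply: dlim_val.
  apply: (fsum_deriv n (fun l t => dcoef n (Z t) (single l) i * dcoef n (Z t) (single l) j)).
  move=> l Hl; apply: derivable_pt_lim_mult; exact: dcoef_deriv HZd _.
apply: fsum_ext => l Hl; rewrite /dEcoef /Ecoef /Fcoef !HZ0.
by congr (_ * _ + _ * _); apply: fsum_ext => k Hk; rewrite HZ0.
Qed.

(* Everything rests on evaluating the deflated polynomials at the
   roots: P_l(x_k) = delta_{kl} P'(x_k), which makes the rows of E dual to
   the columns of w. *)
Section Identities.
Variable n : nat.
Variable x : nat -> R.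
Hypothesis Hx : increasing_seq n x.

Lemma Ecoef_poly l X : (l < n)%coq_nat ->
  fsum n (fun i => X ^ i * Ecoef n x l i) = deval n x (single l) X.
Proof.
move=> Hl; rewrite -(dcoef_eval_deflated n x (single l) X l) //; last by rewrite /single Nat.eqb_refl.
by apply: fsum_ext => i _; rewrite /Ecoef; ring.
Qed.

Lemma Ecoef_at_root l k : (k < n)%coq_nat -> (l < n)%coq_nat ->
  fsum n (fun j => Ecoef n x l j * x k ^ j) =
  if Nat.eqb k l then deval n x (single k) (x k) else 0.
Proof.
move=> Hk Hl; rewrite /Ecoef (dcoef_eval_deflated n x (single l) (x k) l) //; last first.
  by rewrite /single Nat.eqb_refl.
case: (Nat.eqb_spec k l) => [->|Hne] //.
by apply: (fprod_zero _ _ k Hk); rewrite /single (introF (Nat.eqb_spec k l) Hne); ring.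
Qed.

Lemma Fcoef_at_root l k : (k < n)%coq_nat -> (l < n)%coq_nat -> k <> l ->
  fsum n (fun j => Fcoef n x l k j * x k ^ j) * (x k - x l) = deval n x (single k) (x k).
Proof.
move=> Hk Hl Hne; rewrite /Fcoef (dcoef_eval_deflated n x _ (x k) l) //; last first.
  by rewrite /extend /single Nat.eqb_refl.
rewrite (deval_factor n x (single k) (x k) l Hl); last by apply/Nat.eqb_neq; lia.
by rewrite extend_single_comm; ring.
Qed.

Lemma Ecoef_dual l k : (k < n)%coq_nat -> (l < n)%coq_nat ->
  fsum n (fun j => Ecoef n x l j * - dxda n x j k) = if Nat.eqb k l then 1 else 0.
Proof.
move=> Hk Hl; have Hpk := deval_single_neq0 n x k Hx Hk.
rewrite (fsum_ext n _ (fun j => (Ecoef n x l j * x k ^ j) * / deval n x (single k) (x k))).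
  by rewrite -fsum_mulr Ecoef_at_root //; case: (Nat.eqb k l); [field | ring].
by move=> j _; rewrite /dxda /Rdiv; ring.
Qed.

Lemma Fcoef_dual l k : (k < n)%coq_nat -> (l < n)%coq_nat -> k <> l ->
  fsum n (fun j => Fcoef n x l k j * - dxda n x j k) = 1 / (x k - x l).
Proof.
move=> Hk Hl Hne; have Hpk := deval_single_neq0 n x k Hx Hk.
have Hxx := increasing_neq n x Hx k l Hk Hl Hne.
rewrite (fsum_ext n _ (fun j => (Fcoef n x l k j * x k ^ j) * / deval n x (single k) (x k))).
  rewrite -fsum_mulr -(Fcoef_at_root l k) //; field; split => // H.
  by apply: Hpk; rewrite -(Fcoef_at_root l k) // H; ring.
by move=> j _; rewrite /dxda /Rdiv; ring.
Qed.

Lemma G_dlog_contract i :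
  fsum n (fun j => fsum n (fun l => Ecoef n x l i * Ecoef n x l j) *
     fsum n (fun k => dxda n x j k * dlogdiscr n x k)) =
  - fsum n (fun l => Ecoef n x l i * dlogdiscr n x l).
Proof.
rewrite (fsum_ext n _ (fun j => fsum n (fun l => fsum n (fun k =>
    - (Ecoef n x l i * dlogdiscr n x k) * (Ecoef n x l j * - dxda n x j k))))); last first.
  move=> j _; rewrite fsum_mulr; apply: fsum_ext => l _.
  by rewrite fsum_mull; apply: fsum_ext => k _; ring.
rewrite fsum_swap3 -fsum_opp; apply: fsum_ext => l Hl.
rewrite (fsum_ext n _ (fun k => if Nat.eqb k l then - (Ecoef n x l i * dlogdiscr n x k) else 0)).
  exact: (fsum_delta n l (fun k => - (Ecoef n x l i * dlogdiscr n x k))).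
move=> k Hk; rewrite -fsum_mull Ecoef_dual //; case: (Nat.eqb k l); ring.
Qed.

Lemma dlogdiscr_half l : (l < n)%coq_nat ->
  fsum n (fun k => if Nat.eqb k l then 0 else 1 / (x k - x l)) = - dlogdiscr n x l / 2.
Proof.
move=> Hl; rewrite /dlogdiscr /Rdiv -fsum_opp fsum_mulr; apply: fsum_ext => k Hk.
case: (Nat.eqb_spec k l) => [_|Hne]; first ring.
have := increasing_neq n x Hx k l Hk Hl Hne => H.
by field; split => // H2; apply: H; lra.
Qed.

Lemma divergence_G i :
  fsum n (fun j => fsum n (fun l =>
    dEcoef n x j l i * Ecoef n x l j + Ecoef n x l i * dEcoef n x j l j)) =
  - fsum n (fun l => Ecoef n x l i * dlogdiscr n x l) / 2.
Proof.
pose u l k := if Nat.eqb k l then 0 else Fcoef n x l k i.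
pose v l k := if Nat.eqb k l then 0 else 1.
rewrite (fsum_ext n _ (fun j =>
    fsum n (fun l => fsum n (fun k => u l k * (Ecoef n x l j * - dxda n x j k))) +
    fsum n (fun l => fsum n (fun k => Ecoef n x l i * v l k * (Fcoef n x l k j * - dxda n x j k))))).
  rewrite fsum_add [X in X + _]fsum_swap3 [X in _ + X]fsum_swap3.
  rewrite fsum_zero ?Rplus_0_l; last first.
    move=> l Hl; apply: fsum_zero => k Hk; rewrite -fsum_mull Ecoef_dual //.
    by rewrite /u; case: (Nat.eqb k l); ring.
  rewrite /Rdiv -fsum_opp fsum_mulr; apply: fsum_ext => l Hl.
  rewrite (fsum_ext n _ (fun k => Ecoef n x l i * (if Nat.eqb k l then 0 else 1 / (x k - x l)))).
    by rewrite -fsum_mull dlogdiscr_half //; rewrite /Rdiv; ring.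
  move=> k Hk; rewrite -fsum_mull /v; case: (Nat.eqb_spec k l) => [_|Hne]; first ring.
  by rewrite Fcoef_dual //; ring.
move=> j _; rewrite -fsum_add; apply: fsum_ext => l _.
rewrite /dEcoef fsum_mulr fsum_mull -fsum_add -fsum_add; apply: fsum_ext => k _.
by rewrite /u /v /single; case: (Nat.eqb k l); ring.
Qed.

(* Pairing the (l, k) and (k, l)
   terms of sum_l c_l P_l(X) gives this, since
   P_l(X)/(x_l - x_k) + P_k(X)/(x_k - x_l) = P_{lk}(X). *)
Lemma generating_G_dlog X :
  fsum n (fun i => fsum n (fun j => X ^ i * fsum n (fun l => Ecoef n x l i * Ecoef n x l j) *
     fsum n (fun k => dxda n x j k * dlogdiscr n x k))) =
  - fsum n (fun l => fsum n (fun k =>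
      if Nat.eqb k l then 0 else deval n x (extend (single l) k) X)).
Proof.
rewrite (fsum_ext n _ (fun i => - fsum n (fun l => dlogdiscr n x l * (X ^ i * Ecoef n x l i)))); last first.
  move=> i _.
  rewrite (fsum_ext n _ (fun j => X ^ i * (fsum n (fun l => Ecoef n x l i * Ecoef n x l j) *
    fsum n (fun k => dxda n x j k * dlogdiscr n x k)))); last by move=> j _; ring.
  rewrite -fsum_mull G_dlog_contract -fsum_opp fsum_mull -fsum_opp.
  by apply: fsum_ext => l _; ring.
rewrite fsum_opp fsum_swap; congr (- _).
rewrite (fsum_ext n _ (fun l => dlogdiscr n x l * deval n x (single l) X)); last first.
  by move=> l Hl; rewrite -fsum_mull Ecoef_poly.
pose h l k := if Nat.eqb k l then 0 else deval n x (single l) X / (x l - x k).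
rewrite (fsum_ext n _ (fun l => fsum n (h l) + fsum n (h l))); last first.
  move=> l Hl; rewrite /dlogdiscr fsum_mulr -fsum_add; apply: fsum_ext => k Hk.
  by rewrite /h; case: (Nat.eqb k l); rewrite /Rdiv; ring.
rewrite fsum_add [X in _ + X](fsum_swap n n h) -fsum_add.
apply: fsum_ext => l Hl; rewrite -fsum_add; apply: fsum_ext => k Hk; rewrite /h Nat.eqb_sym.
case: (Nat.eqb_spec l k) => [_|Hne]; first ring.
rewrite (deval_factor n x (single l) X k Hk); last by apply/Nat.eqb_neq; lia.
rewrite (deval_factor n x (single k) X l Hl); last by apply/Nat.eqb_neq.
rewrite extend_single_comm.
have := increasing_neq n x Hx l k Hl Hk Hne => H.
by field; split => // H2; apply: H; lra.
Qed.

End Identities.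

Lemma Peval_second_deriv n a x X : is_ordered_roots n a x ->
  deriv1 (deriv1 (Peval n a)) X =
  fsum n (fun l => fsum n (fun k => if Nat.eqb k l then 0 else deval n x (extend (single l) k) X)).
Proof.
move=> Hx.
have -> : deriv1 (Peval n a) = (fun Y => fsum n (fun l => deval n x (single l) Y)).
  apply: functional_extensionality => Y; apply: deriv1_eq.
  apply: (dlim_fun _ (deval n x (fun _ => false))); first exact: Peval_deval.
  by apply: dlim_val; first exact: deval_deriv; apply: fsum_ext => l _; rewrite extend_none.
apply: deriv1_eq; apply: (fsum_deriv n (fun l Y => deval n x (single l) Y)) => l Hl.
exact: deval_deriv.
Qed.

(* Since
   det V^2 = discr and prod_k P'(x_k)^2 = discr^2 > 0, det G = det E^2 = discr. *)

Lemma pow_m1 j : (-1) ^ j = ((-1) ^+ j)%R.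
Proof. by elim: j => //= j ->; rewrite GRing.exprS. Qed.

Lemma ltb_ssr i j : Nat.ltb i j = (i < j)%N.
Proof.
case: (Nat.ltb_spec i j) => H; apply/esym; first by apply/ltP.
by apply/negbTE; rewrite -leqNgt; apply/leP.
Qed.

Lemma det_mx n M : det n M = (\det (\matrix_(i < n, j < n) M i j))%R.
Proof.
elim: n M => [|n IH] M; first by rewrite det_mx00.
change (det n.+1 M) with (fsum n.+1 (fun j =>
  (-1) ^ j * M O j * det n (fun r c => M (S r) (if Nat.ltb c j then c else S c)))).
rewrite (expand_det_row _ ord0) fsum_big; apply: eq_bigr => j _.
rewrite /cofactor mxE IH pow_m1 add0n GRing.mulrCA GRing.mulrA; congr (_ * _)%R.
congr (\det _)%R; apply/matrixP => r c; rewrite !mxE /= /bump /= ltb_ssr.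
by rewrite ltnNge; case: (j <= c)%N.
Qed.

Lemma vdisc_masked n x : vdisc n x =
  fprod n (fun q => fprod n (fun p => if Nat.ltb p q then (x p - x q) ^ 2 else 1)).
Proof. by apply: fprod_ext => q Hq; apply: fprod_restrict; lia. Qed.

Lemma ifsq (b : bool) (v : R) : (if b then v else 1) ^ 2 = if b then v ^ 2 else 1.
Proof. by case: b => //; ring. Qed.

Section Determinant.
Variable n : nat.
Variable x : nat -> R.
Hypothesis Hx : increasing_seq n x.

Definition Emx : 'M[R]_n := (\matrix_(l < n, i < n) Ecoef n x l i)%R.
Definition Vmx : 'M[R]_n := (\matrix_(k < n, j < n) pow (x k) j)%R.

Lemma vdisc_pos : 0 < vdisc n x.
Proof.
apply: fprod_pos => q Hq; apply: fprod_pos => p Hp.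
have := Rsqr_pos_lt _ (increasing_neq n x Hx p q ltac:(lia) Hq ltac:(lia)).
by rewrite /Rsqr /=; lra.
Qed.

Lemma det_gram : det n (fun i j => fsum n (fun l => Ecoef n x l i * Ecoef n x l j)) =
  (\det Emx)%R * (\det Emx)%R.
Proof.
rewrite det_mx.
have -> : (\matrix_(i < n, j < n) fsum n (fun l => Ecoef n x l i * Ecoef n x l j))%R =
    (Emx^T *m Emx)%R.
  by apply/matrixP => i j; rewrite !mxE fsum_big; apply: eq_bigr => l _; rewrite !mxE.
by rewrite det_mulmx det_tr.
Qed.

Lemma Vmx_Emx : (Vmx *m Emx^T)%R = diag_mx (\row_k deval n x (single k) (x k))%R.
Proof.
apply/matrixP => k l; rewrite !mxE.
rewrite (eq_bigr (fun j : 'I_n => Ecoef n x l j * x k ^ j)); last first.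
  by move=> j _; rewrite !mxE; exact: Rmult_comm.
rewrite -(fsum_big n (fun j => Ecoef n x l j * x k ^ j)) Ecoef_at_root; try exact/ltP.
by case: (Nat.eqb_spec k l) => [/val_inj ->|Hne]; rewrite ?eqxx // (introF eqP) // => /(congr1 val).
Qed.

Lemma det_Vmx_sq : (\det Vmx)%R ^ 2 = vdisc n x.
Proof.
have -> : Vmx = ((Vandermonde n (\row_j x j))^T)%R.
  by apply/matrixP => k j; rewrite !mxE pow_expr.
rewrite det_tr det_Vandermonde vdisc_masked fprod_swap.
have -> : (\prod_(i < n) \prod_(j < n | (i < j)%N) ((\row_j0 x j0) 0 j - (\row_j0 x j0) 0 i))%R
    = fprod n (fun i => fprod n (fun j => if Nat.ltb i j then x j - x i else 1)).
  rewrite fprod_big; apply: eq_bigr => i _; rewrite fprod_big big_mkcond /=.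
  by apply: eq_bigr => j _; rewrite !mxE ltb_ssr; case: (i < j)%N.
rewrite fprod_sq; apply: fprod_ext => i _; rewrite fprod_sq; apply: fprod_ext => j _.
by rewrite ifsq; case: (Nat.ltb i j) => //; ring.
Qed.

Lemma deriv_at_root_split k : deval n x (single k) (x k) =
  fprod n (fun l => if Nat.ltb l k then x k - x l else 1) *
  fprod n (fun l => if Nat.ltb k l then x k - x l else 1).
Proof.
rewrite fprod_mul /deval; apply: fprod_ext => l _; rewrite /single.
case: (Nat.eqb_spec l k) => [->|Hne]; first by rewrite Nat.ltb_irrefl; ring.
by case: (Nat.ltb_spec l k) => ?; case: (Nat.ltb_spec k l) => ?; try lia; ring.
Qed.

(* prod_k P'(x_k)^2 = discr^2: each pair p < q occurs twice. *)
Lemma prod_deriv_at_roots_sq :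
  fprod n (fun k => deval n x (single k) (x k)) ^ 2 = vdisc n x * vdisc n x.
Proof.
rewrite fprod_sq (fprod_ext n _ (fun k =>
    fprod n (fun l => if Nat.ltb l k then (x k - x l) ^ 2 else 1) *
    fprod n (fun l => if Nat.ltb k l then (x k - x l) ^ 2 else 1))); last first.
  move=> k _; rewrite deriv_at_root_split Rpow_mult_distr !fprod_sq.
  by congr (_ * _); apply: fprod_ext => l _; rewrite ifsq.
rewrite -fprod_mul vdisc_masked; congr (_ * _); last by rewrite fprod_swap.
by apply: fprod_ext => q _; apply: fprod_ext => p _; case: (Nat.ltb p q) => //; ring.
Qed.

Lemma det_gram_vdisc :
  det n (fun i j => fsum n (fun l => Ecoef n x l i * Ecoef n x l j)) = vdisc n x.
Proof.
have HVE : (\det Vmx)%R * (\det Emx)%R = fprod n (fun k => deval n x (single k) (x k)).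
  have := congr1 determinant Vmx_Emx; rewrite det_mulmx det_tr det_diag => H.
  by apply: (etrans H); rewrite fprod_big; apply: eq_bigr => k _; rewrite mxE.
have HD := vdisc_pos.
have Hsq : vdisc n x * ((\det Emx)%R * (\det Emx)%R) = vdisc n x * vdisc n x.
  by rewrite -prod_deriv_at_roots_sq -HVE -det_Vmx_sq /=; ring.
by rewrite det_gram; apply: (Rmult_eq_reg_l (vdisc n x)) => //; lra.
Qed.
End Determinant.

Lemma discr_vdisc n a x : is_ordered_roots n a x -> discr n a = vdisc n x.
Proof.
move=> Hx; apply: fprod_ext => q Hq; apply: fprod_ext => p Hp.
by rewrite !(roots_eq n a x Hx) //; lia.
Qed.

Lemma G_in_roots n a x i j : is_ordered_roots n a x ->
  G n i j a = fsum n (fun l => Ecoef n x l i * Ecoef n x l j).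
Proof.
move=> Hx; rewrite G_gram; apply: fsum_ext => l _; rewrite /Ecoef.
by rewrite !(dcoef_ext_pts n (roots n a) x) // => m Hm; apply: roots_eq.
Qed.

Theorem mainTheorem4 (n : nat) (a : nat -> R) (Ha : inD n a) :
  discr n a = det n (fun i j => G n i j a) /\
  (forall i, (i < n)%coq_nat ->
     fsum n (fun j => G n i j a * pd (fun b => ln (discr n b)) a j)
     = 2 * fsum n (fun j => pd (fun b => G n i j b) a j)) /\
  (forall X : R,
     fsum n (fun i => fsum n (fun j =>
        X ^ i * G n i j a * pd (fun b => ln (discr n b)) a j))
     = - deriv1 (deriv1 (Peval n a)) X).
Proof.
have [x Hx] := Ha.
have Hinc : increasing_seq n x := proj1 Hx.
have HG : forall i j, G n i j a = fsum n (fun l => Ecoef n x l i * Ecoef n x l j).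
  by move=> i j; apply: G_in_roots.
have HL : forall j, (j < n)%coq_nat ->
    pd (fun b => ln (discr n b)) a j = fsum n (fun k => dxda n x j k * dlogdiscr n x k).
  by move=> j Hj; apply: pd_ln_discr.
split; [|split].
- rewrite (discr_vdisc n a x Hx) -(det_gram_vdisc n x Hinc).
  by congr (det n _); do 2!apply: functional_extensionality => ?; rewrite HG.
- move=> i Hi.
  rewrite (fsum_ext n _ _ (fun j Hj => f_equal2 Rmult (HG i j) (HL j Hj))) G_dlog_contract //.
  rewrite (fsum_ext n _ _ (fun j Hj => pd_G n a x i j Hx Hj)) divergence_G //; field.
- move=> X; rewrite (Peval_second_deriv n a x X Hx) -(generating_G_dlog n x Hinc X).
  by apply: fsum_ext => i _; apply: fsum_ext => j Hj; rewrite HG HL.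
Qed.
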